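(* For $d\in\mathbb{N}$ and $i\in\{1,\dots,d\}$, $$\mu_i(T_d)\leqslant\frac{i}{2}\Big(1+\frac{d-i}{d+1}\Big).$$
   Context: $T_d=\operatorname{conv}(-\mathbb{1}_d,e_1,\dots,e_d)\subseteq\mathbb{R}^d$ is the standard terminal simplex. For a convex body $K\subseteq\mathbb{R}^d$ and $i\in\{1,\dots,d\}$, $\mu_i(K)=\min\{\mu\ge0:(\mu K+\mathbb{Z}^d)\cap U\ne\emptyset$ for every $(d-i)$-dimensional affine subspace $U\subseteq\mathbb{R}^d\}$. *)

From HB Require Import structures.
From mathcomp Require Import all_boot all_order all_algebra.
From mathcomp Require Import classical_sets boolp reals.
Set Implicit Arguments. Unset Strict Implicit. Unset Printing Implicit Defensive.
Import Order.TTheory GRing.Theory Num.Theory.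
Local Open Scope ring_scope.
Local Open Scope classical_set_scope.

(* The standard terminal simplex T_d = conv(-1_d, e_1, ..., e_d), written as
   the set of convex combinations of its d+1 vertices. *)
Definition terminal_simplex (R : realType) (d : nat) : set 'rV[R]_d :=
  [set x | exists l : 'I_d.+1 -> R,
     (forall j, 0 <= l j) /\ \sum_(j < d.+1) l j = 1 /\
     x = l ord0 *: (- const_mx 1)
         + \sum_(j < d) l (lift ord0 j) *: delta_mx 0 j].

Definition int_vec (R : realType) (d : nat) (z : 'rV[R]_d) : Prop :=
  forall j, z 0 j \is a Num.int.

Definition affine_subspace_dim (R : realType) (d k : nat) (U : set 'rV[R]_d)
  : Prop :=
  exists (p : 'rV[R]_d) (B : 'M[R]_(k, d)),
    row_free B /\ U = [set p + w *m B | w in [set: 'rV[R]_k]].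

Definition meets_translates (R : realType) (d : nat) (mu : R)
  (K U : set 'rV[R]_d) : Prop :=
  exists x z, K x /\ int_vec z /\ U (mu *: x + z).

(* i-th covering minimum mu_i(K) = min{mu >= 0 : (mu K + Z^d) meets every
   (d-i)-dimensional affine subspace}; rendered as the infimum of that set
   (which is the minimum whenever it is attained). *)
Definition covering_minimum (R : realType) (d : nat) (K : set 'rV[R]_d)
  (i : nat) : R :=
  inf [set mu : R | 0 <= mu /\
        forall U, affine_subspace_dim (d - i) U -> meets_translates mu K U].
Arguments terminal_simplex : clear implicits.

From mathcomp Require Import all_boot all_order all_algebra.
From mathcomp Require Import classical_sets boolp reals.
From mathcomp Require Import ring lra zify.
Set Implicit Arguments.
Unset Strict Implicit.
Unset Printing Implicit Defensive.
Import Order.TTheory GRing.Theory Num.Theory.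
Local Open Scope ring_scope.

(* Write {a} for the fractional part of a, and for y in R^d put Y = (0, y).
   If the {Y_l - Y_j} (l = 0..d) sum to at most mu for some j, then y lies in
   mu T_d + Z^d: the barycentric weights ({Y_l - Y_j} + slack)/mu give a point
   x of T_d, and only differences of weights enter the coordinates of x, so
   mu x and y differ by a vector of differences of integer parts.
   A k-dimensional affine subspace U contains a point y vanishing on k
   coordinates, so Y vanishes on k + 1 indices.  Since {a} + {-a} is 0 for
   integral a and at most 1 otherwise, the sum of {Y_l - Y_j} over all ordered
   pairs is at most (d(d+1) - k(k+1))/2, and some j is below the average
   (d(d+1) - k(k+1))/(2(d+1)), which equals i/2 (1 + (d-i)/(d+1)) for
   k = d - i. *)

Definition fract (R : archiRealDomainType) (x : R) : R := x - (Num.floor x)%:~R.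

Section FractionalPart.
Variable R : archiRealDomainType.
Implicit Types x : R.

Lemma fract_ge0 x : 0 <= fract x.
Proof. by rewrite subr_ge0 (floor_le x). Qed.

Lemma fractDN x : fract x + fract (- x) = (x \isn't a Num.int)%:R.
Proof.
rewrite /fract [Num.floor x]floorNceil ceil_floor intrN intrD.
by rewrite rpredN; case: (x \is a Num.int) => /=; ring.
Qed.

End FractionalPart.

Lemma sum_nat_mem (T : finType) (A : {pred T}) :
  \sum_(x : T) (x \in A : nat) = #|A|.
Proof.
by rewrite -sum1_card [RHS]big_mkcond; apply: eq_bigr => x _; case: (x \in A).
Qed.

Lemma sum_offdiag_outside (T : finType) (G : {set T}) :
  \sum_(j : T) \sum_(l : T) ((l != j) && ~~ ((l \in G) && (j \in G)) : nat)
  = (#|T| * #|T|.-1 - #|G| * #|G|.-1)%N.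
Proof.
have sum_inG j : j \in G ->
    \sum_l ((l != j) && ~~ ((l \in G) && (j \in G)) : nat) = (#|T| - #|G|)%N.
  move=> jG; rewrite [(_ - _)%N](_ : _ = #|~: G|); last first.
    by rewrite -(cardsC G) addKn.
  rewrite -sum_nat_mem; apply: eq_bigr => l _.
  by rewrite jG andbT inE; case: (l =P j) => [->|]; rewrite ?jG.
have sum_notinG j : j \notin G ->
    \sum_l ((l != j) && ~~ ((l \in G) && (j \in G)) : nat) = #|T|.-1.
  move=> /negbTE jG; rewrite -(cardC1 j) -sum_nat_mem; apply: eq_bigr => l _.
  by rewrite jG andbF andbT inE.
rewrite (bigID (mem G)) /= (eq_bigr _ sum_inG) (eq_bigr _ sum_notinG).
rewrite !sum_nat_const.
have -> : #|(fun j => j \notin G)| = (#|T| - #|G|)%N.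
  by rewrite -(cardC G) addKn.
have := max_card G; set n := #|T|; set g := #|G|; rewrite -!subn1; nia.
Qed.

Section FractDifferences.
Variables (R : archiRealDomainType) (T : finType) (Y : T -> R) (G : {set T}).
Hypothesis YG_int : {in G &, forall l j, Y l - Y j \is a Num.int}.

Lemma fract_diff_pair_le l j :
  fract (Y l - Y j) + fract (Y j - Y l)
    <= ((l != j) && ~~ ((l \in G) && (j \in G)))%:R.
Proof.
rewrite -[Y j - Y l]opprB fractDN ler_nat.
case: (l =P j) => [->|_]; first by rewrite subrr rpred0.
have [/andP[lG jG]|_] := boolP ((l \in G) && (j \in G)); last exact: leq_b1.
by rewrite YG_int.
Qed.

Lemma sum_fract_diff_le :
  (\sum_j \sum_l fract (Y l - Y j)) *+ 2
    <= (#|T| * #|T|.-1 - #|G| * #|G|.-1)%:R.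
Proof.
rewrite -sum_offdiag_outside natr_sum mulr2n {2}exchange_big -big_split.
apply: ler_sum => j _; rewrite natr_sum -big_split.
by apply: ler_sum => l _; exact: fract_diff_pair_le.
Qed.

End FractDifferences.

Lemma exists_le_mean (R : realFieldType) (T : finType) (F : T -> R) :
  (0 < #|T|)%N -> exists j, F j <= (\sum_i F i) / #|T|%:R.
Proof.
move=> T_gt0; apply/not_existsP => F_gt.
have : \sum_(i : T) (\sum_i F i) / #|T|%:R < \sum_i F i.
  apply: ltr_sum => [|j _]; last by rewrite ltNge; apply/negP; exact: F_gt.
  have /card_gt0P[j _] := T_gt0.
  by apply/hasP; exists j; rewrite ?mem_index_enum.
by rewrite sumr_const -[X in X < _]mulr_natr divfK ?ltxx // pnatr_eq0 -lt0n.
Qed.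

Lemma row_free_colsub_zero (F : fieldType) (k d : nat) (B : 'M[F]_(k, d))
    (p : 'rV[F]_d) :
  row_free B ->
  exists2 f : 'I_k -> 'I_d, injective f & exists w, colsub f (p + w *m B) = 0.
Proof.
move=> B_free; have BT_full : row_full B^T by rewrite /row_full mxrank_tr.
exists (fullrankfun BT_full); first exact: fullrankfun_inj.
set f := fullrankfun _.
have Bf_unit : colsub f B \in unitmx.
  have -> : colsub f B = (rowsub f B^T)^T by apply/matrixP => i j; rewrite !mxE.
  by rewrite unitmx_tr fullrowsub_unit.
exists (- colsub f p *m invmx (colsub f B)).
by rewrite raddfD /= -mulmx_colsub -mulmxA mulVmx // mulmx1 addrN.
Qed.

Lemma terminal_simplex_scale_add_int (R : realType) (d : nat) (mu : R)
    (Y : 'I_d.+1 -> R) (j0 : 'I_d.+1) :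
  0 < mu -> \sum_l fract (Y l - Y j0) <= mu ->
  exists x z, terminal_simplex R d x /\ int_vec z /\
    mu *: x + z = \row_j (Y (lift ord0 j) - Y ord0).
Proof.
move=> mu_gt0 sum_le_mu; set c := \sum_l _ in sum_le_mu.
pose tau := (mu - c) / d.+1%:R.
pose lam l := (fract (Y l - Y j0) + tau) / mu.
pose n l := Num.floor (Y l - Y j0).
have mu_lam l : mu * lam l = Y l - Y j0 - (n l)%:~R + tau.
  by rewrite mulrC divfK ?gt_eqF.
exists (lam ord0 *: - const_mx 1
        + \sum_(j < d) lam (lift ord0 j) *: delta_mx 0 j).
exists (\row_j (n (lift ord0 j) - n ord0)%:~R).
split; [exists lam; split; [|split=> //] | split].
- have tau_ge0 : 0 <= tau by apply: divr_ge0; rewrite ?subr_ge0.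
  by move=> l; apply/divr_ge0/ltW/mu_gt0/addr_ge0/tau_ge0/fract_ge0.
- rewrite -mulr_suml big_split /= sumr_const card_ord -/c -mulr_natr.
  by rewrite divfK ?pnatr_eq0 // addrC subrK divff ?gt_eqF.
- by move=> j; rewrite mxE rpred_int.
have -> : \sum_(j < d) lam (lift ord0 j) *: delta_mx 0 j
    = \row_j lam (lift ord0 j).
  by rewrite [RHS]row_sum_delta; apply: eq_bigr => j _; rewrite mxE.
apply/rowP => j; rewrite !mxE mulrDr mulrN1 mulrN mu_lam mu_lam intrB; ring.
Qed.

Lemma terminal_simplex_meets_affine (R : realType) (d k : nat) (mu : R)
    (U : set 'rV[R]_d) :
  affine_subspace_dim k U -> 0 < mu ->
  (d.+1 * d - k.+1 * k)%:R / 2 / d.+1%:R <= mu ->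
  meets_translates mu (terminal_simplex R d) U.
Proof.
move=> [p [B [B_free ->]]] mu_gt0 bound_le_mu.
have [f f_inj [w yf0]] := row_free_colsub_zero p B_free.
set y := p + w *m B in yf0.
pose Y l := if unlift ord0 l is Some j then y 0 j else 0.
pose G := ord0 |: [set lift ord0 (f a) | a in 'I_k].
have YG_int : {in G &, forall l j, Y l - Y j \is a Num.int}.
  suff YG0 l : l \in G -> Y l = 0 by move=> l j /YG0-> /YG0->; rewrite subr0.
  case/setU1P => [->|/imsetP[a _ ->]]; first by rewrite /Y unlift_none.
  by rewrite /Y liftK; have /matrixP/(_ 0 a) := yf0; rewrite !mxE.
have card_G : #|G| = k.+1.
  rewrite cardsU1 card_imset ?card_ord; last by move=> a b /lift_inj/f_inj.
  rewrite (_ : ord0 \notin _) //; apply/imsetP => -[a _ /eqP].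
  by rewrite (negbTE (neq_lift _ _)).
have [j0 le_mean] : exists j0, \sum_l fract (Y l - Y j0)
    <= (\sum_j \sum_l fract (Y l - Y j)) / #|'I_d.+1|%:R.
  by apply: exists_le_mean; rewrite card_ord.
have sum_le := sum_fract_diff_le YG_int.
rewrite card_ord card_G /= mulr2n in le_mean sum_le.
have mean_le_mu : (\sum_j \sum_l fract (Y l - Y j)) / d.+1%:R <= mu.
  apply: le_trans bound_le_mu; rewrite ler_pM2r ?invr_gt0 ?ltr0n //; lra.
have [x [z [Kx [Zz Ex]]]] :=
  terminal_simplex_scale_add_int mu_gt0 (le_trans le_mean mean_le_mu).
exists x, z; split=> //; split=> //; exists w => //.
by rewrite Ex; apply/rowP => j; rewrite [RHS]mxE /Y liftK unlift_none subr0.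
Qed.

Theorem corollary5p9 (R : realType) (d i : nat) :
  (1 <= i <= d)%N ->
  covering_minimum (terminal_simplex R d) i
    <= (i%:R / 2) * (1 + (d - i)%:R / (d + 1)%:R).
Proof.
move=> /andP[i_gt0 i_le_d].
have bound_eq : (d.+1 * d - (d - i).+1 * (d - i))%:R / 2 / d.+1%:R
    = i%:R / 2 * (1 + (d - i)%:R / (d + 1)%:R) :> R.
  have -> : (d.+1 * d - (d - i).+1 * (d - i) = i * (d.+1 + (d - i)))%N by nia.
  by rewrite -addn1 natrM natrD; field; rewrite natr1 pnatr_eq0.
have bound_gt0 : 0 < i%:R / 2 * (1 + (d - i)%:R / (d + 1)%:R) :> R.
  have : 0 <= (d - i)%:R / (d + 1)%:R :> R by rewrite divr_ge0.
  by move=> ge0; apply: mulr_gt0; [rewrite divr_gt0 ?ltr0n | lra].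
apply: ge_inf; first by exists 0 => mu [].
split; first exact: ltW.
move=> U U_dim; apply: terminal_simplex_meets_affine U_dim bound_gt0 _.
by rewrite bound_eq.
Qed.
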